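(* Let $(e_i)_{i\in\omega}$ be a sequence of events equipped with the linear order $<_0$ ($e_i<_0 e_j$ iff $i<j$), predicates $\mathrm{Add},\mathrm{Rem},\mathrm{Cnt}$ and functions $\mathrm{val},\chi$ as described in the context, and let $\gamma$ be a function satisfying FS0, FS1 and FS2. Then for every event $x$ with $\mathrm{Op}^1(x)$ there is no event $y$ with $\mathrm{Op}^0(y)$ such that $\gamma(x)<_0 y<_0 x$ and $\mathrm{val}(x)=\mathrm{val}(y)$.
   Context: Setting: an infinite sequence of events $(e_i)_{i\in\omega}$, linearly ordered by $<_0$ where $e_i<_0e_j$ iff $i<j$. Three unary predicates $\mathrm{Add},\mathrm{Rem},\mathrm{Cnt}$ partition the events. Each event $a$ has a key $\mathrm{val}(a)\in\mathbb N$ and a status $\chi(a)\in\{0,1,f\}$, with $\chi(a)\in\{0,1\}$ whenever $\mathrm{Cnt}(a)$. Notation: for $p\in\{0,1,f\}$, $\mathrm{Add}^p(a)$ abbreviates $\mathrm{Add}(a)\wedge\chi(a)=p$, and $\mathrm{Rem}^p(a)$ similarly; $\mathrm{Cnt}^p(a)$ is defined similarly for $p\in\{0,1\}$; for $p\in\{0,1\}$, $\mathrm{Op}^p(a)$ abbreviates $(\mathrm{Add}(a)\vee\mathrm{Rem}(a)\vee\mathrm{Cnt}(a))\wedge\chi(a)=p$. Properties of a function $\gamma$: FS0: $<_0$ is a linear ordering of the events; $\mathrm{Add},\mathrm{Rem},\mathrm{Cnt}$ are pairwise disjoint; $\gamma$ is defined on the set of $\mathrm{Op}^1$ events and its values are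 $\mathrm{Add}^0$ events. FS1: for every event $a$ with $\mathrm{Op}^1(a)$: $\gamma(a)<_0 a$, $\mathrm{Add}^0(\gamma(a))$, $\mathrm{val}(a)=\mathrm{val}(\gamma(a))$, and there is no event $r$ with $\mathrm{Rem}^1(r)$, $\gamma(r)=\gamma(a)$ and $\gamma(a)<_0 r<_0 a$. FS2: for all events $a<_0 b$ with $\mathrm{Add}^0(a)$ and $\mathrm{Op}^0(b)$: if $\mathrm{val}(a)=\mathrm{val}(b)$ then there is an event $r$ with $a<_0 r<_0 b$, $\mathrm{Rem}^1(r)$ and $a=\gamma(r)$. *)

(* Events e_i are identified with their indices i : nat,
   so the order <_0 is the usual < on nat. *)
From Stdlib Require Import Arith.

Inductive status : Type := S0 | S1 | Sf.

Section Defs.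
Variables (Add Rem Cnt : nat -> Prop) (val : nat -> nat) (chi : nat -> status).

Definition AddP (p : status) (a : nat) : Prop := Add a /\ chi a = p.
Definition RemP (p : status) (a : nat) : Prop := Rem a /\ chi a = p.
Definition CntP (p : status) (a : nat) : Prop := Cnt a /\ chi a = p.
Definition OpP (p : status) (a : nat) : Prop := (Add a \/ Rem a \/ Cnt a) /\ chi a = p.

Definition events_wf : Prop :=
  (forall a, Add a \/ Rem a \/ Cnt a) /\
  (forall a, ~ (Add a /\ Rem a)) /\ (forall a, ~ (Add a /\ Cnt a)) /\
  (forall a, ~ (Rem a /\ Cnt a)) /\
  (forall a, Cnt a -> chi a = S0 \/ chi a = S1).

(* gamma is a total function nat -> nat; only its values on Op^1 events matter. *)
Definition FS0 (gamma : nat -> nat) : Prop :=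
  (forall a, ~ (Add a /\ Rem a)) /\ (forall a, ~ (Add a /\ Cnt a)) /\
  (forall a, ~ (Rem a /\ Cnt a)) /\
  (forall a, OpP S1 a -> AddP S0 (gamma a)).

Definition FS1 (gamma : nat -> nat) : Prop :=
  forall a, OpP S1 a ->
    gamma a < a /\ AddP S0 (gamma a) /\ val a = val (gamma a) /\
    ~ (exists r, RemP S1 r /\ gamma r = gamma a /\ gamma a < r /\ r < a).

Definition FS2 (gamma : nat -> nat) : Prop :=
  forall a b, a < b -> AddP S0 a -> OpP S0 b -> val a = val b ->
    exists r, a < r /\ r < b /\ RemP S1 r /\ a = gamma r.
End Defs.

From Stdlib Require Import Arith.

Lemma FS2_removal_between (Add Rem Cnt : nat -> Prop) (val : nat -> nat)
  (chi : nat -> status) (gamma : nat -> nat) :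
  FS1 Add Rem Cnt val chi gamma -> FS2 Add Rem Cnt val chi gamma ->
  forall x y, OpP Add Rem Cnt chi S1 x -> OpP Add Rem Cnt chi S0 y ->
    gamma x < y -> val x = val y ->
    exists r, RemP Rem chi S1 r /\ gamma r = gamma x /\ gamma x < r /\ r < y.
Proof.
  intros HFS1 HFS2 x y Hx Hy Hxy Hval.
  destruct (HFS1 x Hx) as (_ & Hadd & Hval_gx & _).
  destruct (HFS2 (gamma x) y Hxy Hadd Hy (eq_trans (eq_sym Hval_gx) Hval))
    as (r & Hgr & Hry & Hrem & Hgamma).
  exists r; auto.
Qed.

Theorem lemma2p1 (Add Rem Cnt : nat -> Prop) (val : nat -> nat) (chi : nat -> status)
  (gamma : nat -> nat) :
  events_wf Add Rem Cnt chi ->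
  FS0 Add Rem Cnt chi gamma -> FS1 Add Rem Cnt val chi gamma -> FS2 Add Rem Cnt val chi gamma ->
  forall x, OpP Add Rem Cnt chi S1 x ->
    ~ (exists y, OpP Add Rem Cnt chi S0 y /\ gamma x < y /\ y < x /\ val x = val y).
Proof.
  intros _ _ HFS1 HFS2 x Hx (y & Hy & Hxy & Hyx & Hval).
  destruct (FS2_removal_between _ _ _ _ _ _ HFS1 HFS2 x y Hx Hy Hxy Hval)
    as (r & Hrem & Hgamma & Hgr & Hry).
  destruct (HFS1 x Hx) as (_ & _ & _ & Hno_removal).
  apply Hno_removal.
  exists r.
  exact (conj Hrem (conj Hgamma (conj Hgr (Nat.lt_trans _ _ _ Hry Hyx)))).
Qed.
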